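(* Let $M\le V$ be a subspace such that there is an $X\in\mathcal G$ with $M\le X$ and $\dim(X/M)=1$, and let $\mathcal G[M\rangle:=\{E\le V\mid M\le E \text{ and } \dim(E/M)=1\}$ (the star with centre $M$). Then: (1) $\mathcal G[M\rangle\subseteq\mathcal G$; (2) any two distinct elements $E,E'\in\mathcal G[M\rangle$ are adjacent; (3) two adjacent elements $E,E'\in\mathcal G$ both belong to $\mathcal G[M\rangle$ if and only if $E\cap E'=M$.
   Context: $K$ is a (not necessarily commutative) field and $V$ is a left vector space over $K$ of arbitrary (possibly infinite) dimension with $\dim V>2$. $\mathcal G:=\{X\le V\mid X\cong V/X\}$ is the set of subspaces of $V$ isomorphic (as $K$-vector spaces) to their quotient space, assumed nonempty. Dimensions are vector space dimensions. Two elements $X,Y\in\mathcal G$ are called adjacent if $\dim((X+Y)/X)=\dim((X+Y)/Y)=1$, equivalently $\dim(X/(X\cap Y))=\dim(Y/(X\cap Y))=1$. *)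

(* Subspaces of a (possibly infinite-dimensional) left vector
   space V over a division ring K are represented as Prop-valued predicates. *)
From HB Require Import structures.
From mathcomp Require Import all_boot all_order all_algebra.
Set Implicit Arguments. Unset Strict Implicit. Unset Printing Implicit Defensive.
Import GRing.Theory.
Local Open Scope ring_scope.

Definition division_ring (K : unitRingType) : Prop :=
  forall x : K, x != 0 -> x \is a GRing.unit.

Section Defs.
Variables (K : unitRingType) (V : lmodType K).

Definition subspace (U : V -> Prop) : Prop :=
  U 0 /\ (forall (k : K) (x y : V), U x -> U y -> U (k *: x + y)).

Definition dim_gt2 : Prop :=
  exists u v w : V, forall a b c : K,
    a *: u + b *: v + c *: w = 0 -> [/\ a = 0, b = 0 & c = 0].

(* X is isomorphic to V/X: a K-linear bijection h : X -> V/X, where h x is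
   represented by a chosen representative in V of the coset h(x) + X. *)
Definition iso_to_quotient (X : V -> Prop) : Prop :=
  exists h : V -> V,
    (forall (k : K) (x y : V), X x -> X y ->
        X (h (k *: x + y) - (k *: h x + h y)))
    /\ (forall x y : V, X x -> X y -> X (h x - h y) -> x = y)
    /\ (forall v : V, exists x, X x /\ X (v - h x)).

Definition inG (X : V -> Prop) : Prop := subspace X /\ iso_to_quotient X.

Definition quot_dim1 (M X : V -> Prop) : Prop :=
  (forall v, M v -> X v) /\
  exists u, X u /\ ~ M u /\ forall x, X x -> exists k : K, M (x - k *: u).

Definition adjacent (X Y : V -> Prop) : Prop :=
  quot_dim1 (fun v => X v /\ Y v) X /\ quot_dim1 (fun v => X v /\ Y v) Y.

Definition star (M E : V -> Prop) : Prop := subspace E /\ quot_dim1 M E.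

End Defs.

From mathcomp Require Import all_boot all_order all_algebra.
From mathcomp Require Import boolp classical_sets.
Set Implicit Arguments. Unset Strict Implicit. Unset Printing Implicit Defensive.
Import GRing.Theory.
Local Open Scope ring_scope.

(* Any vector of a star element E outside M spans E over M, so two elements of
   the star G[M> sharing a vector outside M coincide; this gives (2) and (3).
   For (1), let X = M + Ku in G and E = M + Kw with w outside X.  Then u, w are
   independent modulo M, and extending M by Zorn's lemma to a maximal subspace
   avoiding Ku + Kw yields a linear form f vanishing on M with f u = 1 and
   f w = -1.  The involution v |-> v + f(v)(w - u) of V maps E onto X, so it
   transports an isomorphism X ~ V/X to E ~ V/E. *)

Section Subspace.
Variables (K : unitRingType) (V : lmodType K) (S : V -> Prop).
Hypothesis hS : subspace S.

Lemma subspace0 : S 0. Proof. by case: hS. Qed.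

Lemma subspaceD x y : S x -> S y -> S (x + y).
Proof. by move=> Sx Sy; have := hS.2 1 x y Sx Sy; rewrite scale1r. Qed.

Lemma subspaceZ k x : S x -> S (k *: x).
Proof. by move=> Sx; have := hS.2 k x 0 Sx subspace0; rewrite addr0. Qed.

Lemma subspaceB x y : S x -> S y -> S (x - y).
Proof. by move=> Sx Sy; rewrite -scaleN1r; apply: subspaceD; last apply: subspaceZ. Qed.

Lemma subspaceZ_unit k x : k \is a GRing.unit -> S (k *: x) -> S x.
Proof. by move=> ku /(subspaceZ k^-1); rewrite scalerA mulVr ?scale1r. Qed.

Lemma subspaceI (T : V -> Prop) : subspace T -> subspace (fun v => S v /\ T v).
Proof.
move=> hT; split; first by split; [apply: subspace0 | case: hT].
by move=> k x y [Sx Tx] [Sy Ty]; split; [apply: hS.2 | apply: hT.2].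
Qed.

End Subspace.

Lemma quot_dim1_between (K : unitRingType) (V : lmodType K) (M M' X : V -> Prop) :
  subspace M' -> quot_dim1 M X -> (forall v, M v -> M' v) ->
  (forall v, M' v -> X v) -> ~ (forall v, X v -> M' v) -> quot_dim1 M' X.
Proof.
move=> hM' [_ [u [Xu [_ genu]]]] MM' M'X nXM'; split=> //.
exists u; split=> //; split=> [M'u|x Xx]; last first.
  by have [k hk] := genu x Xx; exists k; apply: MM'.
apply: nXM' => x Xx; have [k hk] := genu x Xx.
by rewrite -(subrK (k *: u) x); apply: subspaceD => //; [apply: MM' | apply: subspaceZ].
Qed.

Section Star.
Variables (K : unitRingType) (V : lmodType K) (M : V -> Prop).
Hypotheses (hK : division_ring K) (hM : subspace M).

Lemma star_spanned (A : V -> Prop) w : star M A -> A w -> ~ M w ->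
  forall x, A x -> exists k, M (x - k *: w).
Proof.
move=> [_ [_ [u [_ [_ genu]]]]] Aw nMw x Ax.
have [j hj] := genu w Aw; have [k hk] := genu x Ax.
have j_unit : j \is a GRing.unit.
  by apply/hK/eqP => j0; apply: nMw; move: hj; rewrite j0 scale0r subr0.
exists (k * j^-1).
have -> : x - (k * j^-1) *: w = (x - k *: u) - (k * j^-1) *: (w - j *: u).
  by rewrite scalerBr scalerA mulrVK // opprB addrA subrK.
by apply: subspaceB => //; apply: subspaceZ.
Qed.

Lemma star_sub_of_mem (A B : V -> Prop) w : star M A -> subspace B ->
  (forall v, M v -> B v) -> A w -> B w -> ~ M w -> forall x, A x -> B x.
Proof.
move=> sA hB MB Aw Bw nMw x Ax; have [k hk] := star_spanned sA Aw nMw Ax.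
by rewrite -(subrK (k *: w) x); apply: subspaceD => //; [apply: MB | apply: subspaceZ].
Qed.

Lemma star_eq_of_mem (A B : V -> Prop) w : star M A -> star M B ->
  A w -> B w -> ~ M w -> A = B.
Proof.
move=> sA sB Aw Bw nMw; apply/funext => v; apply/propext; split.
  by apply: (star_sub_of_mem (w := w) sA) => //; [case: sB | case: sB => _ []].
by apply: (star_sub_of_mem (w := w) sB) => //; [case: sA | case: sA => _ []].
Qed.

Lemma star_eq_of_sub (A B : V -> Prop) : star M A -> star M B ->
  (forall v, A v -> B v) -> A = B.
Proof.
move=> sA sB AB; have [_ [_ [u [Au [nMu _]]]]] := sA.
exact: (star_eq_of_mem sA sB Au (AB u Au) nMu).
Qed.

Lemma star_adjacent (A B : V -> Prop) : star M A -> star M B -> A <> B ->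
  adjacent A B.
Proof.
move=> sA sB nAB; have [[hA [MA qA]] [hB [MB qB]]] := (sA, sB).
have hAB := subspaceI hA hB.
have MAB v : M v -> A v /\ B v by split; [apply: MA | apply: MB].
split; apply: (quot_dim1_between (M := M)) => //. all: try by move=> v [].
- by move=> AAB; apply: nAB; apply: star_eq_of_sub => // v /AAB [].
- by move=> BAB; apply: nAB; apply/esym/star_eq_of_sub => // v /BAB [].
Qed.

Lemma adjacent_star_meet (E E' : V -> Prop) : subspace E -> subspace E' ->
  adjacent E E' -> (star M E /\ star M E') <-> (forall v, E v /\ E' v <-> M v).
Proof.
move=> hE hE' adjEE'; split=> [[sE sE'] v|meetM]; first split.
- move=> [Ev E'v]; apply: contrapT => nMv.
  have eEE' := star_eq_of_mem sE sE' Ev E'v nMv.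
  have [[_ [u [Eu [nEE'u _]]]] _] := adjEE'.
  by apply: nEE'u; split=> //; rewrite -eEE'.
- by move=> Mv; split; [apply: sE.2.1 | apply: sE'.2.1].
have -> : M = (fun v => E v /\ E' v).
  by apply/funext => v; apply/propext; split=> /meetM.
by have [qE qE'] := adjEE'.
Qed.

End Star.

Lemma iso_to_quotient_involution (K : unitRingType) (V : lmodType K)
    (X E : V -> Prop) (phi : V -> V) :
  linear phi -> involutive phi -> (forall v, E v <-> X (phi v)) ->
  iso_to_quotient X -> iso_to_quotient E.
Proof.
move=> phi_lin phiK EX [h [h_lin [h_inj h_surj]]].
have phiB : {morph phi : x y / x - y} := zmod_morphism_linear phi_lin.
exists (phi \o h \o phi); split; last split.
- move=> k x y /EX Xx /EX Xy; apply/EX.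
  by rewrite /= phiB !phi_lin !phiK; apply: h_lin.
- move=> x y /EX Xx /EX Xy /EX; rewrite /= phiB !phiK => /(h_inj _ _ Xx Xy).
  exact: (can_inj phiK).
- move=> v; have [x [Xx Xvx]] := h_surj (phi v).
  by exists (phi x); split; apply/EX; rewrite /= ?phiB !phiK.
Qed.

Section Complement.
Variables (K : unitRingType) (V : lmodType K) (M : V -> Prop) (u w : V).
Hypotheses (hK : division_ring K) (hM : subspace M).

Definition indep_mod (N : V -> Prop) :=
  forall a b : K, N (a *: u + b *: w) -> a = 0 /\ b = 0.

Hypothesis hMuw : indep_mod M.

Definition maximal_indep (N : V -> Prop) :=
  [/\ subspace N, forall v, M v -> N v, indep_mod N &
      forall B, subspace B -> (forall v, N v -> B v) -> indep_mod B ->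
        forall v, B v -> N v].

Lemma exists_maximal_indep : exists N, maximal_indep N.
Proof.
pose good N := [/\ subspace N, forall v, M v -> N v & indep_mod N].
(* Zorn_bigcup also asks the empty union to qualify, hence the first disjunct. *)
pose P N := (forall v, ~ N v) \/ good N.
have [A [PA maxA]] : exists A, P A /\ forall B, (A `<` B)%classic -> ~ P B.
  apply: Zorn_bigcup => F FP Ftot.
  have [[v0 [X0 FX0 X0v0]]|empty] :=
    pselect (exists v, (\bigcup_(X in F) X)%classic v); last first.
    by left=> v Fv; apply: empty; exists v.
  have goodF X v : F X -> X v -> good X by move=> FX Xv; case: (FP X FX) => // /(_ v).
  have [hX0 MX0 _] := goodF X0 v0 FX0 X0v0.
  right; split.
  - split; first by exists X0 => //; apply: subspace0.
    move=> k x y [X FX Xx] [Y FY Yy].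
    have [XY|YX] := Ftot X Y FX FY.
      by exists Y => //; have [hY _ _] := goodF Y y FY Yy; apply: hY.2 => //; apply: XY.
    by exists X => //; have [hX _ _] := goodF X x FX Xx; apply: hX.2 => //; apply: YX.
  - by move=> v Mv; exists X0 => //; apply: MX0.
  - by move=> a b [X FX Xab]; have [_ _] := goodF X _ FX Xab; apply.
have [A0|[hA MA indA]] := PA.
  exfalso; apply: (maxA M); last by right.
  by split=> [v /A0 //|MA]; apply: (A0 0); apply: MA; apply: subspace0.
exists A; split=> // B hB AB indB v Bv; apply: contrapT => nAv.
apply: (maxA B); last by right; split=> // x /MA /AB.
by split=> // BA; apply: nAv; apply: BA.
Qed.

Lemma maximal_indep_spans N : maximal_indep N ->
  forall v, exists a b : K, N (v - (a *: u + b *: w)).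
Proof.
move=> [hN MN indN maxN] v; apply: contrapT => nspan.
pose B x := exists n (c : K), N n /\ x = n + c *: v.
have NB n : N n -> B n by move=> Nn; exists n, 0; rewrite scale0r addr0.
have Bv : B v by exists 0, 1; rewrite add0r scale1r; split=> //; apply: subspace0.
suff /(_ v Bv) Nv : forall x, B x -> N x.
  by apply: nspan; exists 0, 0; rewrite !scale0r addr0 subr0.
apply: maxN => //.
- split; first exact: NB (subspace0 hN).
  move=> k _ _ [n [c [Nn ->]]] [n' [c' [Nn' ->]]].
  exists (k *: n + n'), (k * c + c'); split; first exact: hN.2.
  by rewrite scalerDr scalerDl scalerA addrACA.
- move=> a b [n [c [Nn ncv]]].
  have [c0|cN0] := eqVneq c 0; first by apply: indN; rewrite ncv c0 scale0r addr0.
  exfalso; apply: nspan; exists (c^-1 * a), (c^-1 * b).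
  have -> : v - (c^-1 * a *: u + c^-1 * b *: w) = - (c^-1 *: n).
    rewrite -!scalerA -scalerDr ncv scalerDr scalerA mulVr ?scale1r ?hK //.
    by rewrite opprD addrC addrNK.
  by rewrite -scaleNr; apply: subspaceZ.
Qed.

Lemma exists_scalar_mod (a b : K) :
  exists f : V -> K, [/\ scalar f, forall m, M m -> f m = 0, f u = a & f w = b].
Proof.
have [N maxN] := exists_maximal_indep.
have [hN MN indN _] := maxN.
have spans v : exists p : K * K, N (v - (p.1 *: u + p.2 *: w)).
  by have [p [q hpq]] := maximal_indep_spans maxN v; exists (p, q).
have [c cP] := choice spans.
have c_eq v p q : N (v - (p *: u + q *: w)) -> c v = (p, q).
  move=> hpq; have := subspaceB hN hpq (cP v).
  rewrite opprB addrC subrKA opprD addrACA -!scalerBl.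
  by move=> /indN [/subr0_eq <- /subr0_eq <-]; case: (c v).
exists (fun v => (c v).1 * a + (c v).2 * b); split.
- move=> k x y /=.
  rewrite (@c_eq _ (k * (c x).1 + (c y).1) (k * (c x).2 + (c y).2)) /=.
    by rewrite mulrDr !mulrDl !mulrA addrACA.
  have := hN.2 k _ _ (cP x) (cP y).
  by rewrite scalerBr !scalerDr !scalerDl !scalerA addrACA -opprD addrACA.
- move=> m Mm; rewrite (@c_eq m 0 0) ?mul0r ?addr0 //.
  by rewrite !scale0r addr0 subr0; apply: MN.
- rewrite (@c_eq u 1 0) ?mul1r ?mul0r ?addr0 //.
  by rewrite scale1r scale0r addr0 subrr; apply: subspace0.
- rewrite (@c_eq w 0 1) ?mul1r ?mul0r ?add0r //.
  by rewrite scale1r scale0r add0r subrr; apply: subspace0.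
Qed.

End Complement.

Section Swap.
Variables (K : unitRingType) (V : lmodType K) (M : V -> Prop) (u w : V) (f : V -> K).
Hypotheses (f_scalar : scalar f) (fM : forall m, M m -> f m = 0).
Hypotheses (fu : f u = 1) (fw : f w = -1).

(* f (w - u) = -2 is what makes [swap] an involution, even in characteristic 2. *)
Definition swap v := v + f v *: (w - u).

Lemma swap_linear : linear swap.
Proof.
move=> k x y; rewrite /swap f_scalar scalerDl -scalerA.
by rewrite [k *: (x + _)]scalerDr addrACA.
Qed.

Let fB : {morph f : x y / x - y} := zmod_morphism_linear f_scalar.
Let fZ : scalable_for *%R f := scalable_linear f_scalar.

Lemma swap_involutive : involutive swap.
Proof.
move=> v; rewrite {1}/swap.
have -> : f (swap v) = - f v.
  by rewrite /swap addrC f_scalar fB fu fw mulrBr mulrN1 mulr1 subrK.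
by rewrite /swap scaleNr addrK.
Qed.

Lemma swap_mod_u k x : M (x - k *: u) -> swap x = x - k *: u + k *: w.
Proof.
move=> Mx; have fx : f x = k by move/fM: Mx; rewrite fB fZ fu mulr1 => /subr0_eq.
by rewrite /swap fx scalerBr addrCA addrC.
Qed.

Lemma swap_mod_w k x : M (x - k *: w) -> swap x = x - k *: w + k *: u.
Proof.
move=> Mx; have fx : f x = - k.
  by move/fM: Mx; rewrite fB fZ fw mulrN1 opprK => /eqP; rewrite addr_eq0 => /eqP.
by rewrite /swap fx scaleNr scalerBr opprB addrCA addrC.
Qed.

End Swap.

Lemma indep_mod_outside (K : unitRingType) (V : lmodType K) (M X : V -> Prop) u w :
  division_ring K -> subspace M -> subspace X -> (forall v, M v -> X v) ->
  X u -> ~ M u -> ~ X w -> indep_mod u w M.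
Proof.
move=> hK hM hX MX Xu nMu nXw a b Mab.
have b0 : b = 0.
  apply: contrapT => /eqP /hK bu; apply/nXw/(subspaceZ_unit hX bu).
  have -> : b *: w = a *: u + b *: w - a *: u by rewrite addrC addKr.
  by apply: subspaceB => //; [apply: MX | apply: subspaceZ].
split=> //; apply: contrapT => /eqP /hK au; apply/nMu/(subspaceZ_unit hM au).
by move: Mab; rewrite b0 scale0r addr0.
Qed.

Lemma star_inG (K : unitRingType) (V : lmodType K) (M X E : V -> Prop) :
  division_ring K -> subspace M -> inG X -> star M X -> star M E -> inG E.
Proof.
move=> hK hM [hX isoX] sX sE; split; first by case: sE.
have [_ [MX [u [Xu [nMu genu]]]]] := sX; have [hE [ME [w [Ew [nMw genw]]]]] := sE.
have [Xw|nXw] := pselect (X w); first by rewrite (star_eq_of_mem hK hM sE sX Ew Xw nMw).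
have [f [f_scalar fM fu fw]] :=
  exists_scalar_mod hK hM (indep_mod_outside hK hM hX MX Xu nMu nXw) 1 (-1).
have swapK := swap_involutive f_scalar fu fw.
apply: (iso_to_quotient_involution (swap_linear u w f_scalar) swapK _ isoX) => v; split.
- move=> Ev; have [k Mvk] := genw v Ev; rewrite (swap_mod_w u f_scalar fM fw Mvk).
  by apply: subspaceD => //; [apply: MX | apply: subspaceZ].
- move=> Xv; have [k Mvk] := genu _ Xv.
  rewrite -(swapK v) (swap_mod_u w f_scalar fM fu Mvk).
  by apply: subspaceD => //; [apply: ME | apply: subspaceZ].
Qed.

Theorem lemma2p1 (K : unitRingType) (hK : division_ring K) (V : lmodType K)
  (hdim : dim_gt2 V) (hGne : exists X : V -> Prop, inG X)
  (M : V -> Prop) (hM : subspace M)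
  (hMX : exists X : V -> Prop, inG X /\ quot_dim1 M X) :
  (forall E : V -> Prop, star M E -> inG E) /\
  (forall E E' : V -> Prop, star M E -> star M E' ->
      ~ (forall v, E v <-> E' v) -> adjacent E E') /\
  (forall E E' : V -> Prop, inG E -> inG E' -> adjacent E E' ->
      ((star M E /\ star M E') <-> (forall v, (E v /\ E' v) <-> M v))).
Proof.
have [X [GX qX]] := hMX.
have sX : star M X := conj GX.1 qX.
split; first by move=> E; apply: star_inG hK hM GX sX.
split.
  move=> E E' sE sE' nEE'; apply: (star_adjacent hK hM sE sE') => eEE'.
  by apply: nEE' => v; rewrite eEE'.
by move=> E E' [hE _] [hE' _]; apply: adjacent_star_meet.
Qed.
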